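(* Let $\nabla$ be a non-flat, torsion-free, real-analytic, geodesically complete affine connection on $\mathbf{R}^2$ which is invariant under the standard linear action of $\mathrm{SL}(2,\mathbf{R})$. Then, for some $k\in\mathbf{R}^*$, $$\nabla_{\partial_x}\partial_x=ky^2E,\quad \nabla_{\partial_x}\partial_y=-kxyE,\quad \nabla_{\partial_y}\partial_y=kx^2E,\qquad E=x\partial_x+y\partial_y.$$ Its parametrized geodesics are either lines through the origin parametrized at constant speed, or conics centered at the origin of special affine curvature $\sqrt[3]{k}$, parametrized at constant speed with respect to special affine arc length.
   Context: Special affine arc length and special affine curvature refer to the invariants of plane curves under the group of area-preserving affine maps $\mathrm{SL}(2,\mathbf{R})\ltimes\mathbf{R}^2$ (for a curve parametrized so that $\det(c',c'')=1$, the parameter is the special affine arc length and the special affine curvature is $\kappa=\det(c'',c''')$). *)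

From Stdlib Require Import Reals.
From Coquelicot Require Import Coquelicot.
Open Scope R_scope.

(* Points and tangent vectors of R^2 are pairs (x, y); index 0 = x, 1 = y. *)
Definition vec := (R * R)%type.

Definition cmp (v : vec) (i : nat) : R := if Nat.eqb i 0 then fst v else snd v.

(* An affine connection on R^2 given by its Christoffel symbols:
   G i j k x y = Gamma^k_{ij}(x,y), i.e. nabla_{d_i} d_j = sum_k G i j k d_k
   (only indices 0,1 are meaningful). *)
Definition Chr := nat -> nat -> nat -> R -> R -> R.

Definition sum2 (f : nat -> R) : R := f 0%nat + f 1%nat.

(* Gamma(p)(u,v) = sum_{i,j} u_i v_j Gamma^k_{ij}(p) d_k, i.e. nabla_u V at p
   for the constant field V = v. *)
Definition Gam (G : Chr) (p u v : vec) : vec :=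
  (sum2 (fun i => sum2 (fun j => G i j 0%nat (fst p) (snd p) * cmp u i * cmp v j)),
   sum2 (fun i => sum2 (fun j => G i j 1%nat (fst p) (snd p) * cmp u i * cmp v j))).

Definition torsion_free (G : Chr) : Prop :=
  forall i j k x y, (i < 2)%nat -> (j < 2)%nat -> (k < 2)%nat ->
    G i j k x y = G j i k x y.

Definition real_analytic2 (f : R -> R -> R) : Prop :=
  forall x0 y0, exists r : R, 0 < r /\ exists a : nat -> nat -> R,
    (forall m, ex_series (fun n => Rabs (a m n) * r ^ m * r ^ n)) /\
    ex_series (fun m => Series (fun n => Rabs (a m n) * r ^ m * r ^ n)) /\
    (forall u v, Rabs u < r -> Rabs v < r ->
       f (x0 + u) (y0 + v) = Series (fun m => Series (fun n => a m n * u ^ m * v ^ n))).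

Definition real_analytic_conn (G : Chr) : Prop :=
  forall i j k, (i < 2)%nat -> (j < 2)%nat -> (k < 2)%nat -> real_analytic2 (G i j k).

Definition dpart (i : nat) (f : R -> R -> R) (x y : R) : R :=
  if Nat.eqb i 0 then Derive (fun t => f t y) x else Derive (fun t => f x t) y.

(* Curvature components: R(d_i, d_j) d_k = sum_l curv G l i j k d_l. *)
Definition curv (G : Chr) (l i j k : nat) (x y : R) : R :=
  dpart i (G j k l) x y - dpart j (G i k l) x y
  + sum2 (fun m => G i m l x y * G j k m x y - G j m l x y * G i k m x y).

Definition flat (G : Chr) : Prop :=
  forall l i j k x y, (l < 2)%nat -> (i < 2)%nat -> (j < 2)%nat -> (k < 2)%nat ->
    curv G l i j k x y = 0.

Definition has_deriv (c v : R -> vec) : Prop :=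
  forall t, is_derive (fun s => fst (c s)) t (fst (v t)) /\
            is_derive (fun s => snd (c s)) t (snd (v t)).

Definition geodesic_data (G : Chr) (c v a : R -> vec) : Prop :=
  has_deriv c v /\ has_deriv v a /\
  forall t, fst (a t) + fst (Gam G (c t) (v t) (v t)) = 0 /\
            snd (a t) + snd (Gam G (c t) (v t) (v t)) = 0.

Definition is_geodesic (G : Chr) (c : R -> vec) : Prop :=
  exists v a, geodesic_data G c v a.

Definition geod_complete (G : Chr) : Prop :=
  forall p w : vec, exists c v a, geodesic_data G c v a /\ c 0 = p /\ v 0 = w.

Definition lin (a b c d : R) (p : vec) : vec :=
  (a * fst p + b * snd p, c * fst p + d * snd p).

(* Invariance under the linear map A (A_* nabla = nabla); as A is linear its
   second derivative vanishes, so this is Gamma(Ap)(Au,Av) = A Gamma(p)(u,v). *)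
Definition SL2_invariant (G : Chr) : Prop :=
  forall a b c d, a * d - b * c = 1 ->
    forall p u v, Gam G (lin a b c d p) (lin a b c d u) (lin a b c d v)
                  = lin a b c d (Gam G p u v).

Definition det2 (u v : vec) : R := fst u * snd v - snd u * fst v.

From Stdlib Require Import Reals Lra Lia.
From Coquelicot Require Import Coquelicot.
Open Scope R_scope.

(* SL(2,R) acts transitively on R^2 \ {0} with unipotent stabilisers, so invariance forces
   Gam(p)(u,v) = a w(p,u) w(p,v) p + b (w(p,u) v + w(p,v) u) with w = det2 and two constants
   a, b. Along a geodesic h = w(c,c') satisfies the Riccati
   equation h' = -2 b h^2, which blows up in finite time unless b = 0; so completeness gives
   b = 0 and non-flatness gives a <> 0. Then h is constant and c'' = -a h^2 c: for h = 0 the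
   geodesic is a line through the origin, otherwise the form lam c c^T + c' c'^T (lam = a h^2)
   is conserved and its adjugate is the matrix of a central conic through c. *)

Definition vscal (k : R) (w : vec) : vec := (k * fst w, k * snd w).

Lemma det2_vscal_l (k : R) (u w : vec) : det2 (vscal k u) w = k * det2 u w.
Proof. unfold det2, vscal; cbn [fst snd]; ring. Qed.

Lemma det2_vscal_r (k : R) (u w : vec) : det2 u (vscal k w) = k * det2 u w.
Proof. unfold det2, vscal; cbn [fst snd]; ring. Qed.

Lemma det2_swap (u w : vec) : det2 w u = - det2 u w.
Proof. unfold det2; ring. Qed.

Lemma cmp_vscal (k : R) (w : vec) (i : nat) : cmp (vscal k w) i = k * cmp w i.
Proof. unfold cmp, vscal; destruct (Nat.eqb i 0); reflexivity. Qed.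

Lemma det2_zero_collinear (p w : vec) : det2 p w = 0 ->
  exists (alpha beta : R) (u : vec), p = vscal beta u /\ w = vscal alpha u.
Proof.
  destruct p as [x y], w as [p q]; unfold det2, vscal; cbn [fst snd]; intros H.
  destruct (Req_dec (p * p + q * q) 0) as [Hn|Hn].
  - exists 0, 1, (x, y); cbn [fst snd]; split; f_equal; nra.
  - exists 1, ((x * p + y * q) / (p * p + q * q)), (p, q); cbn [fst snd].
    assert (Hxq : x * q = y * p) by lra.
    split; f_equal; try ring; field_simplify_eq; auto.
    + transitivity (x * p ^ 2 + q * (x * q)); [ring|rewrite Hxq; ring].
    + transitivity (y * q ^ 2 + p * (y * p)); [ring|rewrite <- Hxq; ring].
Qed.

Lemma cube_root_exists (x : R) : exists r : R, r ^ 3 = x.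
Proof.
  assert (Hpos : forall y, 0 < y -> Rpower y (/ 3) ^ 3 = y).
  { intros y Hy. rewrite <- Rpower_pow by apply exp_pos.
    rewrite Rpower_mult. replace (/ 3 * INR 3) with 1 by (simpl; field).
    apply Rpower_1; exact Hy. }
  destruct (Rtotal_order x 0) as [Hx|[Hx|Hx]].
  - exists (- Rpower (- x) (/ 3)).
    replace ((- Rpower (- x) (/ 3)) ^ 3) with (- (Rpower (- x) (/ 3) ^ 3)) by ring.
    rewrite Hpos; lra.
  - exists 0; subst; ring.
  - exists (Rpower x (/ 3)); apply Hpos; exact Hx.
Qed.

Definition sl2_Gam (a b : R) (p u v : vec) : vec :=
  (a * det2 p u * det2 p v * fst p + b * (det2 p u * fst v + det2 p v * fst u),
   a * det2 p u * det2 p v * snd p + b * (det2 p u * snd v + det2 p v * snd u)).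

Lemma SL2_invariant_at (G : Chr) (a b c d : R) (p u v p' u' v' : vec) :
  SL2_invariant G -> a * d - b * c = 1 ->
  p' = lin a b c d p -> u' = lin a b c d u -> v' = lin a b c d v ->
  Gam G p' u' v' = lin a b c d (Gam G p u v).
Proof. intros HI H -> -> ->; exact (HI a b c d H p u v). Qed.

Ltac lin_eq := unfold lin; cbn [fst snd]; f_equal; field.

(* Invariance under the stabiliser [[1, t], [0, 1]] of (1,0), for t = 1 and t = -1,
   together with symmetry, leaves only two free Christoffel symbols at (1,0). *)
Lemma Gam_at_e1 (G : Chr) : torsion_free G -> SL2_invariant G -> forall u v,
  Gam G (1, 0) u v = sl2_Gam (G 1%nat 1%nat 0%nat 1 0) (G 0%nat 1%nat 0%nat 1 0) (1, 0) u v.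
Proof.
  intros HT HI u v.
  assert (E1 := SL2_invariant_at G 1 1 0 1 (1,0) (1,0) (1,0) (1,0) (1,0) (1,0)
     HI ltac:(ring) ltac:(lin_eq) ltac:(lin_eq) ltac:(lin_eq)).
  assert (E2 := SL2_invariant_at G 1 1 0 1 (1,0) (1,0) (0,1) (1,0) (1,0) (1,1)
     HI ltac:(ring) ltac:(lin_eq) ltac:(lin_eq) ltac:(lin_eq)).
  assert (E3 := SL2_invariant_at G 1 1 0 1 (1,0) (0,1) (0,1) (1,0) (1,1) (1,1)
     HI ltac:(ring) ltac:(lin_eq) ltac:(lin_eq) ltac:(lin_eq)).
  assert (E4 := SL2_invariant_at G 1 (-1) 0 1 (1,0) (0,1) (0,1) (1,0) (-1,1) (-1,1)
     HI ltac:(ring) ltac:(lin_eq) ltac:(lin_eq) ltac:(lin_eq)).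
  assert (T0 := HT 1%nat 0%nat 0%nat 1 0 ltac:(lia) ltac:(lia) ltac:(lia)).
  assert (T1 := HT 1%nat 0%nat 1%nat 1 0 ltac:(lia) ltac:(lia) ltac:(lia)).
  unfold Gam, sum2, cmp, lin in E1, E2, E3, E4; cbn [fst snd Nat.eqb] in E1, E2, E3, E4.
  injection E1; injection E2; injection E3; injection E4; intros.
  assert (H000 : G 0%nat 0%nat 0%nat 1 0 = 0) by lra.
  assert (H001 : G 0%nat 0%nat 1%nat 1 0 = 0) by lra.
  assert (H011 : G 0%nat 1%nat 1%nat 1 0 = 0) by lra.
  assert (H111 : G 1%nat 1%nat 1%nat 1 0 = 2 * G 0%nat 1%nat 0%nat 1 0) by lra.
  unfold Gam, sl2_Gam, det2, sum2, cmp; cbn [fst snd Nat.eqb].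
  rewrite T0, T1, H000, H001, H011, H111; f_equal; ring.
Qed.

(* A point p = (x, y) <> 0 is the image of (1,0) under [[x, -y/n], [y, x/n]], n = x^2 + y^2;
   at the origin, invariance under -I makes the bilinear map Gam vanish. *)
Lemma Gam_sl2_normal_form (G : Chr) : torsion_free G -> SL2_invariant G -> forall p u v,
  Gam G p u v = sl2_Gam (G 1%nat 1%nat 0%nat 1 0) (G 0%nat 1%nat 0%nat 1 0) p u v.
Proof.
  intros HT HI [x y] [u1 u2] [v1 v2].
  destruct (Req_dec (x * x + y * y) 0) as [Hn|Hn].
  - assert (x = 0) by nra; assert (y = 0) by nra; subst.
    assert (E := SL2_invariant_at G (-1) 0 0 (-1) (0,0) (-u1,-u2) (-v1,-v2) (0,0) (u1,u2) (v1,v2)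
      HI ltac:(ring) ltac:(lin_eq) ltac:(lin_eq) ltac:(lin_eq)).
    unfold Gam, sum2, cmp, lin in E |- *; cbn [fst snd Nat.eqb] in E |- *.
    injection E; intros E1 E2.
    unfold sl2_Gam, det2; cbn [fst snd]; f_equal; nra.
  - set (n := x * x + y * y).
    assert (E := SL2_invariant_at G x (- y / n) y (x / n) (1,0)
      (x / n * u1 + y / n * u2, - y * u1 + x * u2) (x / n * v1 + y / n * v2, - y * v1 + x * v2)
      (x, y) (u1, u2) (v1, v2) HI
      ltac:(unfold n; field; exact Hn)
      ltac:(unfold lin; cbn [fst snd]; f_equal; unfold n; field; exact Hn)
      ltac:(unfold lin; cbn [fst snd]; f_equal; unfold n; field; exact Hn)
      ltac:(unfold lin; cbn [fst snd]; f_equal; unfold n; field; exact Hn)).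
    rewrite E, Gam_at_e1 by assumption.
    unfold sl2_Gam, lin, det2; cbn [fst snd]; f_equal; unfold n; field; exact Hn.
Qed.

Lemma is_derive_Rplus (f g : R -> R) (t df dg : R) :
  is_derive f t df -> is_derive g t dg -> is_derive (fun s => f s + g s) t (df + dg).
Proof. exact (is_derive_plus f g t df dg). Qed.

Lemma is_derive_Rminus (f g : R -> R) (t df dg : R) :
  is_derive f t df -> is_derive g t dg -> is_derive (fun s => f s - g s) t (df - dg).
Proof. exact (is_derive_minus f g t df dg). Qed.

Lemma is_derive_zero_const (f : R -> R) : (forall t, is_derive f t 0) -> forall t, f t = f 0.
Proof.
  intros H t; destruct (Rtotal_order t 0) as [Hl|[->|Hg]].
  - apply eq_is_derive; [intros; apply H|exact Hl].
  - reflexivity.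
  - symmetry; apply eq_is_derive; [intros; apply H|exact Hg].
Qed.

Lemma is_derive_const_slope (f : R -> R) (k : R) :
  (forall t, is_derive f t k) -> forall t, f t = f 0 + k * t.
Proof.
  intros H t.
  assert (E := is_derive_zero_const (fun s => f s - k * s)).
  enough (f t - k * t = f 0 - k * 0) by lra.
  apply E; intros s.
  replace 0 with (k - k * 1) by ring.
  apply is_derive_Rminus; [apply H|apply is_derive_scal; exact (is_derive_id _)].
Qed.

Lemma is_derive_rescale (f : R -> R) (mu s l : R) : mu <> 0 ->
  is_derive f (s / mu) l -> is_derive (fun s => f (s / mu)) s (/ mu * l).
Proof.
  intros Hmu Hf.
  apply (is_derive_comp f (fun s => s / mu) s l (/ mu) Hf).
  auto_derive; [exact I|ring].
Qed.

(* Along [h' = k h^2, h(0) = 1] the quantity [1/h + k t] is constant, so [1/h] would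
   vanish at [t = 1/k]; before that time [h >= 1] stays away from 0. *)
Lemma riccati_blowup (h : R -> R) (k : R) :
  k <> 0 -> (forall t, is_derive h t (k * h t ^ 2)) -> h 0 = 1 -> False.
Proof.
  intros Hk Hd H0.
  assert (Hge : forall t, 0 <= k * t -> 1 <= h t).
  { intros t Ht.
    destruct (MVT_cor4 h (fun s => k * h s ^ 2) 0 (Rabs t) (fun s _ => Hd s) t)
      as [s [Hs _]]; [rewrite Rminus_0_r; lra|].
    rewrite H0 in Hs. nra. }
  set (phi := fun t => / h t + k * t).
  assert (Hphi : forall t, 0 <= k * t -> is_derive phi t 0).
  { intros t Ht; specialize (Hge t Ht).
    replace 0 with (- (k * h t ^ 2) / h t ^ 2 + k * 1) by (field; lra).
    apply is_derive_Rplus; [apply is_derive_inv; [apply Hd|lra]|apply is_derive_scal; exact (is_derive_id _)]. }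
  assert (Hend : phi (/ k) = phi 0).
  { destruct (Rtotal_order k 0) as [Hl|[He|Hg]]; [|lra|].
    - assert (/ k < 0) by (apply Rinv_lt_0_compat; lra).
      apply eq_is_derive; [|lra].
      intros t Ht; apply Hphi; nra.
    - assert (0 < / k) by (apply Rinv_0_lt_compat; lra).
      symmetry; apply eq_is_derive; [|lra].
      intros t Ht; apply Hphi; nra. }
  assert (H1 := Hge (/ k) ltac:(rewrite Rinv_r; lra)).
  assert (0 < / h (/ k)) by (apply Rinv_0_lt_compat; lra).
  unfold phi in Hend; rewrite H0, Rinv_r, Rinv_1 in Hend by exact Hk; lra.
Qed.

Lemma has_deriv_cmp (c v : R -> vec) (i : nat) (t : R) :
  has_deriv c v -> is_derive (fun s => cmp (c s) i) t (cmp (v t) i).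
Proof. intros H; unfold cmp; destruct (Nat.eqb i 0); apply H. Qed.

Lemma has_deriv_vscal (k : R) (c v : R -> vec) :
  has_deriv c v -> has_deriv (fun s => vscal k (c s)) (fun s => vscal k (v s)).
Proof. intros H t; unfold vscal; cbn [fst snd]; split; apply is_derive_scal, H. Qed.

Lemma has_deriv_rescale (mu : R) (c v : R -> vec) : mu <> 0 ->
  has_deriv c v -> has_deriv (fun s => c (s / mu)) (fun s => vscal (/ mu) (v (s / mu))).
Proof.
  intros Hmu H s; split.
  - exact (is_derive_rescale (fun t => fst (c t)) mu s _ Hmu (proj1 (H (s / mu)))).
  - exact (is_derive_rescale (fun t => snd (c t)) mu s _ Hmu (proj2 (H (s / mu)))).
Qed.

Lemma det2_deriv (c v ac : R -> vec) : has_deriv c v -> has_deriv v ac ->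
  forall t, is_derive (fun s => det2 (c s) (v s)) t (det2 (c t) (ac t)).
Proof.
  intros Hc Hv t; destruct (Hc t) as [Hc1 Hc2], (Hv t) as [Hv1 Hv2]; unfold det2.
  replace (fst (c t) * snd (ac t) - snd (c t) * fst (ac t))
    with ((fst (v t) * snd (v t) + fst (c t) * snd (ac t))
          - (snd (v t) * fst (v t) + snd (c t) * fst (ac t))) by ring.
  apply is_derive_Rminus; apply Derive.is_derive_mult; assumption.
Qed.

Definition harmonic_form (lam : R) (p v : vec) (i j : nat) : R :=
  lam * cmp p i * cmp p j + cmp v i * cmp v j.

Lemma harmonic_form_adj (lam : R) (p v : vec) :
  harmonic_form lam p v 1 1 * fst p ^ 2 - 2 * harmonic_form lam p v 0 1 * fst p * snd p
  + harmonic_form lam p v 0 0 * snd p ^ 2 = det2 p v ^ 2.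
Proof. unfold harmonic_form, det2, cmp; cbn [Nat.eqb]; ring. Qed.

Lemma harmonic_form_det (lam : R) (p v : vec) :
  harmonic_form lam p v 0 0 * harmonic_form lam p v 1 1 - harmonic_form lam p v 0 1 ^ 2
  = lam * det2 p v ^ 2.
Proof. unfold harmonic_form, det2, cmp; cbn [Nat.eqb]; ring. Qed.

Section HarmonicCurve.

Variables (lam : R) (c v : R -> vec).
Hypothesis Hc : has_deriv c v.
Hypothesis Hv : has_deriv v (fun t => vscal (- lam) (c t)).

Lemma harmonic_det2_const (t : R) : det2 (c t) (v t) = det2 (c 0) (v 0).
Proof.
  apply (is_derive_zero_const (fun s => det2 (c s) (v s))); intros s.
  replace 0 with (det2 (c s) (vscal (- lam) (c s))) by (unfold det2, vscal; cbn [fst snd]; ring).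
  exact (det2_deriv c v _ Hc Hv s).
Qed.

Lemma harmonic_form_const (i j : nat) (t : R) :
  harmonic_form lam (c t) (v t) i j = harmonic_form lam (c 0) (v 0) i j.
Proof.
  apply (is_derive_zero_const (fun s => harmonic_form lam (c s) (v s) i j)); intros s.
  unfold harmonic_form.
  pose proof (has_deriv_cmp c v i s Hc) as Dci; pose proof (has_deriv_cmp c v j s Hc) as Dcj.
  pose proof (has_deriv_cmp _ _ i s Hv) as Dvi; pose proof (has_deriv_cmp _ _ j s Hv) as Dvj.
  cbv beta in Dvi, Dvj; rewrite cmp_vscal in Dvi, Dvj.
  replace 0 with (lam * cmp (v s) i * cmp (c s) j + lam * cmp (c s) i * cmp (v s) j
    + (- lam * cmp (c s) i * cmp (v s) j + cmp (v s) i * (- lam * cmp (c s) j))) by ring.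
  apply is_derive_Rplus.
  - apply (Derive.is_derive_mult (fun s => lam * cmp (c s) i)); [apply is_derive_scal|]; assumption.
  - apply (Derive.is_derive_mult (fun s => cmp (v s) i)); assumption.
Qed.

Lemma harmonic_line : lam = 0 -> det2 (c 0) (v 0) = 0 ->
  exists (alpha beta : R) (w : vec),
    forall t, c t = ((alpha * t + beta) * fst w, (alpha * t + beta) * snd w).
Proof.
  intros Hlam Hh.
  assert (Hv0 : forall i t, cmp (v t) i = cmp (v 0) i).
  { intros i; apply (is_derive_zero_const (fun t => cmp (v t) i)); intros t.
    replace 0 with (cmp (vscal (- lam) (c t)) i) by (rewrite cmp_vscal, Hlam; ring).
    exact (has_deriv_cmp _ _ i t Hv). }
  assert (Hc0 : forall i t, cmp (c t) i = cmp (c 0) i + cmp (v 0) i * t).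
  { intros i; apply (is_derive_const_slope (fun t => cmp (c t) i)); intros t.
    rewrite <- (Hv0 i t); exact (has_deriv_cmp c v i t Hc). }
  destruct (det2_zero_collinear _ _ Hh) as (alpha & beta & w & Ec & Ev).
  exists alpha, beta, w; intros t.
  rewrite (surjective_pairing (c t)).
  assert (E0 := Hc0 0%nat t); assert (E1 := Hc0 1%nat t).
  unfold cmp in E0, E1; cbn [Nat.eqb] in E0, E1; rewrite Ec, Ev in E0, E1.
  unfold vscal in E0, E1; cbn [fst snd] in E0, E1.
  rewrite E0, E1; f_equal; ring.
Qed.

(* Rescaling time by [mu = kappa h0] normalises [det2 c' c''] to 1. The conserved form
   [harmonic_form] is (up to the factor [h0^2]) the adjugate of the conic's matrix. *)
Lemma harmonic_conic (kappa : R) : kappa <> 0 -> det2 (c 0) (v 0) <> 0 ->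
  lam = kappa ^ 3 * det2 (c 0) (v 0) ^ 2 ->
  exists (mu nu : R) (gam g1 g2 g3 : R -> vec) (s11 s12 s22 : R),
    mu <> 0 /\
    (forall t, c t = gam (mu * t + nu)) /\
    has_deriv gam g1 /\ has_deriv g1 g2 /\ has_deriv g2 g3 /\
    (forall s, det2 (g1 s) (g2 s) = 1) /\
    (forall s, det2 (g2 s) (g3 s) = kappa) /\
    s11 * s22 - s12 ^ 2 <> 0 /\
    (forall s, s11 * fst (gam s) ^ 2 + 2 * s12 * fst (gam s) * snd (gam s)
               + s22 * snd (gam s) ^ 2 = 1).
Proof.
  intros Hk Hh Hlam.
  set (h0 := det2 (c 0) (v 0)) in *.
  set (mu := kappa * h0).
  assert (Hmu : mu <> 0) by (apply Rmult_integral_contrapositive; tauto).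
  set (N := harmonic_form lam (c 0) (v 0)).
  exists mu, 0, (fun s => c (s / mu)),
    (fun s => vscal (/ mu) (v (s / mu))),
    (fun s => vscal (/ mu) (vscal (/ mu) (vscal (- lam) (c (s / mu))))),
    (fun s => vscal (/ mu) (vscal (/ mu) (vscal (/ mu) (vscal (- lam) (v (s / mu)))))),
    (N 1%nat 1%nat / h0 ^ 2), (- N 0%nat 1%nat / h0 ^ 2), (N 0%nat 0%nat / h0 ^ 2).
  refine (conj Hmu (conj _ (conj _ (conj _ (conj _ (conj _ (conj _ (conj _ _)))))))).
  - intros t; f_equal; field; exact Hmu.
  - exact (has_deriv_rescale mu c v Hmu Hc).
  - apply has_deriv_vscal; exact (has_deriv_rescale mu v _ Hmu Hv).
  - do 2 apply has_deriv_vscal.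
    exact (has_deriv_rescale mu _ _ Hmu (has_deriv_vscal (- lam) c v Hc)).
  - intros s; rewrite !det2_vscal_l, !det2_vscal_r, det2_swap, harmonic_det2_const.
    fold h0; rewrite Hlam; unfold mu; field; split; assumption.
  - intros s; rewrite !det2_vscal_l, !det2_vscal_r, harmonic_det2_const.
    fold h0; rewrite Hlam; unfold mu; field; split; assumption.
  - assert (D := harmonic_form_det lam (c 0) (v 0)); fold h0 N in D.
    clearbody N h0.
    assert (E : N 1%nat 1%nat / h0 ^ 2 * (N 0%nat 0%nat / h0 ^ 2) - (- N 0%nat 1%nat / h0 ^ 2) ^ 2
                = kappa ^ 3).
    { transitivity ((N 0%nat 0%nat * N 1%nat 1%nat - N 0%nat 1%nat ^ 2) / h0 ^ 4).
      - field; exact Hh.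
      - rewrite D, Hlam; field; exact Hh. }
    rewrite E; apply pow_nonzero; exact Hk.
  - intros s.
    assert (A := harmonic_form_adj lam (c (s / mu)) (v (s / mu))).
    rewrite (harmonic_form_const 0 0), (harmonic_form_const 0 1), (harmonic_form_const 1 1),
      harmonic_det2_const in A; fold h0 N in A.
    clearbody N h0.
    transitivity ((N 1%nat 1%nat * fst (c (s / mu)) ^ 2
      - 2 * N 0%nat 1%nat * fst (c (s / mu)) * snd (c (s / mu))
      + N 0%nat 0%nat * snd (c (s / mu)) ^ 2) / h0 ^ 2).
    + field; exact Hh.
    + rewrite A; field; exact Hh.
Qed.

End HarmonicCurve.

Definition std_basis (i : nat) : vec := if Nat.eqb i 0 then (1, 0) else (0, 1).

Lemma Christoffel_Gam_basis (G : Chr) (i j k : nat) (x y : R) :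
  (i < 2)%nat -> (j < 2)%nat -> (k < 2)%nat ->
  G i j k x y = cmp (Gam G (x, y) (std_basis i) (std_basis j)) k.
Proof.
  intros Hi Hj Hk.
  destruct i as [|[|i]]; destruct j as [|[|j]]; destruct k as [|[|k]]; try lia;
    unfold Gam, std_basis, sum2, cmp; cbn [fst snd Nat.eqb]; ring.
Qed.

Lemma flat_of_Gam_zero (G : Chr) : (forall p u v, Gam G p u v = (0, 0)) -> flat G.
Proof.
  intros H l i j k x y Hl Hi Hj Hk.
  assert (Z : forall i j k x y, (i < 2)%nat -> (j < 2)%nat -> (k < 2)%nat -> G i j k x y = 0).
  { intros i' j' k' x' y' Hi' Hj' Hk'.
    rewrite Christoffel_Gam_basis, H by assumption; unfold cmp; destruct (Nat.eqb k' 0); reflexivity. }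
  assert (Dz : forall m f, (forall x y, f x y = 0) -> dpart m f x y = 0).
  { intros m f Hf; unfold dpart; destruct (Nat.eqb m 0);
      rewrite (Derive_ext _ (fun _ => 0)) by (intros; apply Hf); apply Derive_const. }
  unfold curv, sum2; rewrite !Dz by (intros; apply Z; assumption); rewrite !Z by lia; ring.
Qed.

Lemma sl2_Gam_b0 (a : R) (p u v : vec) : sl2_Gam a 0 p u v = vscal (a * det2 p u * det2 p v) p.
Proof. unfold sl2_Gam, vscal; f_equal; ring. Qed.

Lemma det2_sl2_Gam_diag (a b : R) (p v : vec) : det2 p (sl2_Gam a b p v v) = 2 * b * det2 p v ^ 2.
Proof. unfold sl2_Gam, det2; cbn [fst snd]; ring. Qed.

Section SL2Connection.

Variables (G : Chr) (a b : R).
Hypothesis HG : forall p u v, Gam G p u v = sl2_Gam a b p u v.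

Lemma sl2_geodesic_accel (c v ac : R -> vec) : geodesic_data G c v ac ->
  forall t, ac t = vscal (- 1) (sl2_Gam a b (c t) (v t) (v t)).
Proof.
  intros [_ [_ Hg]] t; destruct (Hg t) as [E1 E2]; rewrite HG in E1, E2.
  rewrite (surjective_pairing (ac t)); unfold vscal; f_equal; lra.
Qed.

Lemma sl2_geodesic_det2_deriv (c v ac : R -> vec) : geodesic_data G c v ac ->
  forall t, is_derive (fun s => det2 (c s) (v s)) t (- 2 * b * det2 (c t) (v t) ^ 2).
Proof.
  intros Hd t; pose proof Hd as [Hc [Hv _]].
  replace (- 2 * b * det2 (c t) (v t) ^ 2) with (det2 (c t) (ac t))
    by (rewrite (sl2_geodesic_accel c v ac Hd), det2_vscal_r, det2_sl2_Gam_diag; ring).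
  exact (det2_deriv c v ac Hc Hv t).
Qed.

(* The geodesic through (1,0) with velocity (0,1) has [det2 c c' = 1] at time 0 and
   obeys a Riccati equation, which has no solution on all of R unless [b = 0]. *)
Lemma sl2_complete_b0 : geod_complete G -> b = 0.
Proof.
  intros HC; destruct (Req_dec b 0) as [|Hb]; [assumption|exfalso].
  destruct (HC (1, 0) (0, 1)) as (c & v & ac & Hd & Hc0 & Hv0).
  apply (riccati_blowup (fun t => det2 (c t) (v t)) (- 2 * b)); [lra| |].
  - exact (sl2_geodesic_det2_deriv c v ac Hd).
  - cbv beta; rewrite Hc0, Hv0; unfold det2; cbn [fst snd]; ring.
Qed.

Lemma sl2_Christoffel : b = 0 -> forall x y,
  G 0%nat 0%nat 0%nat x y = a * y ^ 2 * x /\ G 0%nat 0%nat 1%nat x y = a * y ^ 2 * y /\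
  G 0%nat 1%nat 0%nat x y = - a * x * y * x /\ G 0%nat 1%nat 1%nat x y = - a * x * y * y /\
  G 1%nat 1%nat 0%nat x y = a * x ^ 2 * x /\ G 1%nat 1%nat 1%nat x y = a * x ^ 2 * y.
Proof.
  intros Hb x y; rewrite !(Christoffel_Gam_basis G _ _ _ x y) by lia; rewrite !HG, Hb.
  unfold sl2_Gam, std_basis, cmp, det2; cbn [fst snd Nat.eqb]; repeat split; ring.
Qed.

Lemma sl2_geodesic_harmonic (c v ac : R -> vec) : b = 0 -> geodesic_data G c v ac ->
  has_deriv v (fun t => vscal (- (a * det2 (c 0) (v 0) ^ 2)) (c t)).
Proof.
  intros Hb Hd t.
  assert (Hh : forall s, det2 (c s) (v s) = det2 (c 0) (v 0)).
  { apply (is_derive_zero_const (fun s => det2 (c s) (v s))); intros s.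
    replace 0 with (- 2 * b * det2 (c s) (v s) ^ 2) by (rewrite Hb; ring).
    exact (sl2_geodesic_det2_deriv c v ac Hd s). }
  replace (vscal (- (a * det2 (c 0) (v 0) ^ 2)) (c t)) with (ac t).
  - destruct Hd as [_ [Hv _]]; apply Hv.
  - rewrite (sl2_geodesic_accel c v ac Hd), Hb, sl2_Gam_b0, <- (Hh t).
    unfold vscal; cbn [fst snd]; f_equal; ring.
Qed.

Lemma sl2_geodesic_classification (c : R -> vec) : a <> 0 -> b = 0 -> is_geodesic G c ->
  (exists (alpha beta : R) (w : vec),
     forall t, c t = ((alpha * t + beta) * fst w, (alpha * t + beta) * snd w)) \/
  (exists (kappa mu nu : R) (gam g1 g2 g3 : R -> vec) (s11 s12 s22 : R),
     kappa ^ 3 = a /\ mu <> 0 /\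
     (forall t, c t = gam (mu * t + nu)) /\
     has_deriv gam g1 /\ has_deriv g1 g2 /\ has_deriv g2 g3 /\
     (forall s, det2 (g1 s) (g2 s) = 1) /\
     (forall s, det2 (g2 s) (g3 s) = kappa) /\
     s11 * s22 - s12 ^ 2 <> 0 /\
     (forall s, s11 * fst (gam s) ^ 2 + 2 * s12 * fst (gam s) * snd (gam s)
                + s22 * snd (gam s) ^ 2 = 1)).
Proof.
  intros Ha Hb (v & ac & Hd).
  set (lam := a * det2 (c 0) (v 0) ^ 2).
  assert (Hc : has_deriv c v) by apply Hd.
  assert (Hv := sl2_geodesic_harmonic c v ac Hb Hd); fold lam in Hv.
  destruct (Req_dec (det2 (c 0) (v 0)) 0) as [H0|H0].
  - left; apply (harmonic_line lam c v Hc Hv); [unfold lam; rewrite H0; ring|exact H0].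
  - right; destruct (cube_root_exists a) as [kappa Hk].
    assert (Hk0 : kappa <> 0) by (intros ->; apply Ha; rewrite <- Hk; ring).
    destruct (harmonic_conic lam c v Hc Hv kappa Hk0 H0 ltac:(unfold lam; rewrite Hk; reflexivity))
      as (mu & nu & gam & g1 & g2 & g3 & s11 & s12 & s22 & Hconic).
    exists kappa, mu, nu, gam, g1, g2, g3, s11, s12, s22; split; assumption.
Qed.

End SL2Connection.

Theorem proposition8p1 (G : Chr) :
  torsion_free G -> real_analytic_conn G -> geod_complete G ->
  SL2_invariant G -> ~ flat G ->
  exists k : R, k <> 0 /\
    (forall x y,
       G 0%nat 0%nat 0%nat x y = k * y ^ 2 * x /\ G 0%nat 0%nat 1%nat x y = k * y ^ 2 * y /\
       G 0%nat 1%nat 0%nat x y = - k * x * y * x /\ G 0%nat 1%nat 1%nat x y = - k * x * y * y /\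
       G 1%nat 1%nat 0%nat x y = k * x ^ 2 * x /\ G 1%nat 1%nat 1%nat x y = k * x ^ 2 * y) /\
    (forall c : R -> vec, is_geodesic G c ->
       (* a line through the origin parametrized at constant speed *)
       (exists (alpha beta : R) (w : vec),
          forall t, c t = ((alpha * t + beta) * fst w, (alpha * t + beta) * snd w))
       \/
       (* a conic centered at the origin of special affine curvature kappa = k^(1/3),
          parametrized at constant speed w.r.t. special affine arc length:
          c(t) = gamma(mu t + nu) with gamma a special-affine-arclength
          parametrization (det(gamma',gamma'') = 1) *)
       (exists (kappa mu nu : R) (gam g1 g2 g3 : R -> vec) (s11 s12 s22 : R),
          kappa ^ 3 = k /\ mu <> 0 /\
          (forall t, c t = gam (mu * t + nu)) /\
          has_deriv gam g1 /\ has_deriv g1 g2 /\ has_deriv g2 g3 /\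
          (forall s, det2 (g1 s) (g2 s) = 1) /\
          (forall s, det2 (g2 s) (g3 s) = kappa) /\
          s11 * s22 - s12 ^ 2 <> 0 /\
          (forall s, s11 * fst (gam s) ^ 2 + 2 * s12 * fst (gam s) * snd (gam s)
                     + s22 * snd (gam s) ^ 2 = 1))).
Proof.
  intros HT _ HC HI HF.
  set (a := G 1%nat 1%nat 0%nat 1 0); set (b := G 0%nat 1%nat 0%nat 1 0).
  assert (HG := Gam_sl2_normal_form G HT HI); fold a b in HG.
  assert (Hb := sl2_complete_b0 G a b HG HC).
  assert (Ha : a <> 0).
  { intros Ha0; apply HF, flat_of_Gam_zero; intros p u v.
    rewrite HG, Ha0, Hb; unfold sl2_Gam; f_equal; ring. }
  exists a; split; [exact Ha|split].
  - exact (sl2_Christoffel G a b HG Hb).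
  - intros c Hc; exact (sl2_geodesic_classification G a b HG c Ha Hb Hc).
Qed.
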